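(* Let $H$ be a string, $s\ge0$ an integer, and $j\in\mathsf{R}_{s,H}$. For any $j'\in[1\mathinner{.\,.}n]$, $\mathrm{LCE}(j,j')\ge3\tau-1$ holds if and only if $j'\in\mathsf{R}_{s,H}$. Moreover, if $j'\in\mathsf{R}_{s,H}$ then, letting $t=\mathrm{end}(j)-j$ and $t'=\mathrm{end}(j')-j'$, it holds $\mathrm{LCE}(j,j')\ge\min(t,t')$ and: (1) if $\mathrm{type}(j)\ne\mathrm{type}(j')$, then $T[j\mathinner{.\,.}n]\prec T[j'\mathinner{.\,.}n]$ iff $\mathrm{type}(j)<\mathrm{type}(j')$; (2) if $\mathrm{type}(j)=\mathrm{type}(j')=-1$ and $t\ne t'$, then $T[j\mathinner{.\,.}n]\prec T[j'\mathinner{.\,.}n]$ iff $t<t'$; (3) if $\mathrm{type}(j)=\mathrm{type}(j')=+1$ and $t\ne t'$, then $T[j\mathinner{.\,.}n]\prec T[j'\mathinner{.\,.}n]$ iff $t>t'$; (4) if $\mathrm{type}(j)\ne\mathrm{type}(j')$ or $t\ne t'$, then $\mathrm{LCE}(j,j')=\min(t,t')$.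
   Context: $T\in[0\mathinner{.\,.}\sigma)^n$ with $2\le\sigma<n^{1/7}$; $\tau=\lfloor\mu\log_\sigma n\rfloor$ for a fixed positive constant $\mu<1/6$ with $\tau\ge1$. $\prec$ is lexicographic order. $\mathrm{per}(S)$ is the shortest period of $S$. $\mathsf{R}=\{i\in[1\mathinner{.\,.}n-3\tau+2]:\mathrm{per}(T[i\mathinner{.\,.}i+3\tau-2])\le\tau/3\}$. $\mathrm{LCE}(i,i')$ is the length of the longest common prefix of $T[i\mathinner{.\,.}n]$ and $T[i'\mathinner{.\,.}n]$. For $j\in\mathsf{R}$: $\mathrm{end}(j)=\min\{j'\ge j:j'\notin\mathsf{R}\}+3\tau-2$; with $p=\mathrm{per}(T[j\mathinner{.\,.}j+3\tau-1))$, $\mathrm{Lroot}(j)=\min\{T[j+t\mathinner{.\,.}j+t+p):t\in[0\mathinner{.\,.}p)\}$ (lexicographic minimum). With $H=\mathrm{Lroot}(j)$, $T[j\mathinner{.\,.}\mathrm{end}(j))$ can be uniquely written as $H'H^kH''$ with $H'$ a proper suffix and $H''$ a proper prefix of $H$ (the L-decomposition); $\mathrm{Lhead}(j)=|H'|$. $\mathrm{type}(j)=+1$ if $\mathrm{end}(j)\le n$ and $T[\mathrm{end}(j)]\succ T[\mathrm{end}(j)-|H|]$, and $\mathrm{type}(j)=-1$ otherwise. $\mathsf{R}_{s,H}=\{j\in\mathsf{R}:\mathrm{Lroot}(j)=H,\ \mathrm{Lhead}(j)=s\}$. *)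

From mathcomp Require Import all_boot.
From Stdlib Require Import Reals ZArith.

Set Implicit Arguments.
Unset Strict Implicit.
Unset Printing Implicit Defensive.

(* Text T is a seq nat of length n; positions are 1-based: T[i] = nth 0 T (i-1). *)
Definition tch (T : seq nat) (i : nat) : nat := nth 0 T i.-1.

(* T[i .. k)  (1-based, right end exclusive) *)
Definition sub (T : seq nat) (i k : nat) : seq nat :=
  [seq tch T x | x <- iota i (k - i)].

Definition suff (T : seq nat) (i : nat) : seq nat := drop i.-1 T.

Fixpoint lexlt (s t : seq nat) : bool :=
  match s, t with
  | _, [::] => false
  | [::], _ :: _ => true
  | a :: s', b :: t' => (a < b) || ((a == b) && lexlt s' t')
  end.

Fixpoint lcp (s t : seq nat) : nat :=
  match s, t with
  | a :: s', b :: t' => if a == b then (lcp s' t').+1 else 0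
  | _, _ => 0
  end.

Definition LCE (T : seq nat) (i i' : nat) : nat := lcp (suff T i) (suff T i').

Definition is_period (S : seq nat) (p : nat) : bool :=
  (0 < p) && all (fun i => nth 0 S i == nth 0 S (i + p)) (iota 0 (size S - p)).

Definition per (S : seq nat) : nat := (find (is_period S) (iota 1 (size S))).+1.

(* i \in R  :  i in [1 .. n-3tau+2]  and  per(T[i .. i+3tau-2]) <= tau/3 *)
Definition inR (T : seq nat) (tau i : nat) : bool :=
  [&& 1 <= i, i + 3 * tau <= size T + 2 &
      3 * per (sub T i (i + 3 * tau - 1)) <= tau].

(* end(j) = min{ j' >= j : j' \notin R } + 3tau - 2 *)
Definition endp (T : seq nat) (tau j : nat) : nat :=
  j + find (fun d => ~~ inR T tau (j + d)) (iota 0 (size T).+2) + 3 * tau - 2.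

Definition lexmin (l : seq (seq nat)) : seq nat :=
  foldl (fun m x => if lexlt x m then x else m) (head [::] l) (behead l).

Definition Lroot (T : seq nat) (tau j : nat) : seq nat :=
  let p := per (sub T j (j + 3 * tau - 1)) in
  lexmin [seq sub T (j + t) (j + t + p) | t <- iota 0 p].

(* S = H' H^k H'' with H' the proper suffix of H of length s (s < |H|) and
   H'' a proper prefix of H *)
Definition Ldecomp_ok (S H : seq nat) (s : nat) : bool :=
  [exists k : 'I_(size S).+1, exists m : 'I_(size H),
     S == drop (size H - s) H ++ flatten (nseq k H) ++ take m H].

(* Lhead(j) = |H'| in the L-decomposition of T[j .. end(j)) *)
Definition Lhead (T : seq nat) (tau j : nat) : nat :=
  let H := Lroot T tau j in
  find (Ldecomp_ok (sub T j (endp T tau j)) H) (iota 0 (size H)).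

Definition typ (T : seq nat) (tau j : nat) : Z :=
  let e := endp T tau j in
  if (e <= size T) && (tch T (e - size (Lroot T tau j)) < tch T e)
  then 1%Z else (-1)%Z.

Definition inRsH (T : seq nat) (tau s : nat) (H : seq nat) (j : nat) : Prop :=
  inR T tau j /\ Lroot T tau j = H /\ Lhead T tau j = s.

From mathcomp Require Import all_boot.
From Stdlib Require Import Reals ZArith Lia.
From mathcomp Require Import zify.

Set Implicit Arguments.
Unset Strict Implicit.
Unset Printing Implicit Defensive.

(* Let p = per(T[j..j+3tau-1)).  The period p of the window at j propagates
   along the consecutive windows of R (each overlaps the next in more than the
   sum of their periods), so T[j..end(j)) is p-periodic and the run breaks at
   end(j): T[end(j)] <> T[end(j)-p] whenever end(j) <= n.  Hence Lroot(j) is a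
   rotation of T[j..j+p), and membership in R, Lroot(j) and Lhead(j) depend only
   on the first 3tau-1 characters of T[j..n], which gives the first equivalence.
   Two positions of R_{s,H} both spell a prefix of H'HH..., so they share
   min(t,t') characters and first differ where the shorter run breaks (where
   both runs break if t = t').  There the breaking character exceeds the periodic
   continuation exactly when the type is +1, which decides both the LCE and the
   order. *)

Lemma lcpC (a b : seq nat) : lcp a b = lcp b a.
Proof. by elim: a b => [|x a IHa] [|y b] //=; rewrite eq_sym IHa. Qed.

Lemma lcp_cat2l (u a b : seq nat) : lcp (u ++ a) (u ++ b) = size u + lcp a b.
Proof. by elim: u => //= x u ->; rewrite eqxx. Qed.

Lemma lexlt_cat2l (u a b : seq nat) : lexlt (u ++ a) (u ++ b) = lexlt a b.
Proof. by elim: u => //= x u ->; rewrite eqxx ltnn. Qed.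

Lemma take_lcp (a b : seq nat) : take (lcp a b) a = take (lcp a b) b.
Proof.
by elim: a b => [|x a IHa] [|y b] //=; case: eqP => [->|] //=; rewrite IHa.
Qed.

Lemma lcp_leq_size (a b : seq nat) : lcp a b <= minn (size a) (size b).
Proof.
elim: a b => [|x a IHa] [|y b] //=; case: eqP => // _.
by rewrite minnSS ltnS.
Qed.

Lemma size_sub T i k : size (sub T i k) = k - i.
Proof. by rewrite size_map size_iota. Qed.

Lemma nth_sub T i k x : x < k - i -> nth 0 (sub T i k) x = tch T (i + x).
Proof. by move=> lt_x; rewrite (nth_map 0) ?size_iota // nth_iota. Qed.

Lemma sub_shift T a b l :
  (forall i, i < l -> tch T (a + i) = tch T (b + i)) ->
  sub T a (a + l) = sub T b (b + l).
Proof.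
move=> eq_ab; apply: (@eq_from_nth _ 0) => [|i]; rewrite !size_sub ?addKn // => lt_il.
by rewrite !nth_sub ?addKn // eq_ab.
Qed.

Lemma size_suff T x : 0 < x -> size (suff T x) = (size T).+1 - x.
Proof. by move=> x_gt0; rewrite size_drop; lia. Qed.

Lemma nth_suff T x i : 0 < x -> nth 0 (suff T x) i = tch T (x + i).
Proof. by move=> x_gt0; rewrite nth_drop /tch; congr nth; lia. Qed.

Lemma drop_suff T x k : 0 < x -> drop k (suff T x) = suff T (x + k).
Proof. by move=> x_gt0; rewrite drop_drop; congr drop; lia. Qed.

Lemma suff_cons T x : 0 < x -> x <= size T -> suff T x = tch T x :: suff T x.+1.
Proof.
move=> x_gt0 le_xT; rewrite /suff (drop_nth 0); last by lia.
by rewrite /tch; congr (_ :: drop _ _); lia.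
Qed.

Lemma suff_nil T x : size T < x -> suff T x = [::].
Proof. by move=> lt_Tx; rewrite /suff drop_oversize //; lia. Qed.

Lemma suff_common_prefix T j j' k : 0 < j -> 0 < j' ->
  j + k <= (size T).+1 -> j' + k <= (size T).+1 ->
  (forall i, i < k -> tch T (j + i) = tch T (j' + i)) ->
  exists2 u : seq nat, size u = k &
    suff T j = u ++ suff T (j + k) /\ suff T j' = u ++ suff T (j' + k).
Proof.
move=> j_gt0 j'_gt0 le_jk le_j'k agree.
have size_take_suff x : 0 < x -> x + k <= (size T).+1 -> size (take k (suff T x)) = k.
  by move=> x_gt0 le_xk; rewrite size_takel // size_suff //; lia.
exists (take k (suff T j)); first exact: size_take_suff.
rewrite -(@drop_suff T j k) // -(@drop_suff T j' k) // cat_take_drop; split=> //.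
suff -> : take k (suff T j) = take k (suff T j') by rewrite cat_take_drop.
apply: (@eq_from_nth _ 0) => [|i]; rewrite !size_take_suff // => lt_ik.
by rewrite !nth_take // !nth_suff // agree.
Qed.

Lemma LCE_geP T j j' k : 0 < j -> 0 < j' -> 0 < k ->
  k <= LCE T j j' <->
  [/\ j + k <= (size T).+1, j' + k <= (size T).+1 &
      forall i, i < k -> tch T (j + i) = tch T (j' + i)].
Proof.
rewrite /LCE => j_gt0 j'_gt0 k_gt0; split=> [le_k|[le_jk le_j'k agree]]; last first.
  have [u size_u [-> ->]] := suff_common_prefix j_gt0 j'_gt0 le_jk le_j'k agree.
  by rewrite lcp_cat2l size_u leq_addr.
have := lcp_leq_size (suff T j) (suff T j'); rewrite !size_suff // leq_min => /andP[lt_j lt_j'].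
split; [lia | lia | move=> i lt_ik].
rewrite -!nth_suff // -(nth_take 0 (leq_trans lt_ik le_k)) take_lcp.
by rewrite nth_take //; apply: leq_trans le_k.
Qed.

Definition periodic_on T a b p :=
  forall x, a <= x -> x + p < b -> tch T x = tch T (x + p).

Lemma is_periodP S p :
  is_period S p <-> 0 < p /\ forall i, i + p < size S -> nth 0 S i = nth 0 S (i + p).
Proof.
split=> [/andP[p_gt0 /allP per_S]|[p_gt0 per_S]].
  by split=> // i lt_i; apply/eqP/per_S; rewrite mem_iota; lia.
by apply/andP; split=> //; apply/allP=> i; rewrite mem_iota => lt_i; apply/eqP/per_S; lia.
Qed.

Lemma is_period_sub T a b p : 0 < p -> is_period (sub T a b) p <-> periodic_on T a b p.
Proof.
move=> p_gt0; rewrite is_periodP size_sub.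
split=> [[_ per_S] x le_ax lt_xb | per_T]; last first.
  split=> // i lt_i; rewrite !nth_sub; try lia.
  by rewrite addnA; apply: per_T; lia.
have := per_S (x - a); rewrite !nth_sub; try lia.
rewrite addnA subnKC //; apply; lia.
Qed.

Lemma per_period S : 0 < size S -> is_period S (per S).
Proof.
move=> S_gt0; have has_per : has (is_period S) (iota 1 (size S)).
  apply/hasP; exists (size S); first by rewrite mem_iota; lia.
  by apply/is_periodP; split=> // i; lia.
have := nth_find 0 has_per; rewrite nth_iota ?add1n //.
by rewrite -{2}(size_iota 1 (size S)) -has_find.
Qed.

Lemma per_min S q : is_period S q -> q <= size S -> per S <= q.
Proof.
move=> per_q le_qS; have [q_gt0 _] := (is_periodP S q).1 per_q.
rewrite /per ltnNge; apply/negP => lt_qf.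
have := @before_find _ 0 (is_period S) (iota 1 (size S)) q.-1.
rewrite nth_iota; last by lia.
rewrite add1n prednK // per_q => not_per.
by have : true = false by apply: not_per; lia.
Qed.

Lemma periodic_on_iter T a b p k x : periodic_on T a b p -> a <= x -> x + k * p < b ->
  tch T x = tch T (x + k * p).
Proof.
move=> per_T; elim: k x => [|k IHk] x le_ax lt_xb; first by rewrite addn0.
rewrite per_T ?(IHk (x + p)); try lia.
by rewrite mulSn addnA.
Qed.

Lemma periodic_on_mod T a b p x y : 0 < p -> periodic_on T a b p ->
  a <= x < b -> a <= y < b -> x = y %[mod p] -> tch T x = tch T y.
Proof.
move=> p_gt0 per_T; wlog le_xy : x y / x <= y.
  move=> wlog_xy x_ab y_ab eq_xy; case: (leqP x y) => [le_xy|/ltnW le_yx].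
    exact: wlog_xy.
  by symmetry; apply: wlog_xy.
move=> /andP[le_ax _] /andP[_ lt_yb] eq_xy.
have /divnK dvd_p : p %| y - x by rewrite -eqn_mod_dvd // eq_xy.
have -> : y = x + (y - x) %/ p * p by rewrite dvd_p subnKC.
by apply: (@periodic_on_iter T a b p) => //; rewrite dvd_p subnKC.
Qed.

Lemma periodic_on_extend T a b c p q :
  0 < q -> periodic_on T a b p -> periodic_on T c b.+1 q -> a <= c -> c + p + q <= b ->
  periodic_on T a b.+1 p.
Proof.
move=> q_gt0 per_p per_q le_ac le_cb x le_ax lt_xb.
case: (ltnP (x + p) b) => [|le_bx]; first exact: per_p.
have -> : x = b - p by lia.
have -> : b - p + p = b by lia.
have eq1 : tch T (b - q) = tch T b by rewrite per_q; [congr tch|..]; lia.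
have eq2 : tch T (b - q - p) = tch T (b - q) by rewrite per_p; [congr tch|..]; lia.
have eq3 : tch T (b - q - p) = tch T (b - p) by rewrite per_q; [congr tch|..]; lia.
by rewrite -eq1 -eq2 eq3.
Qed.

Definition window T tau i := sub T i (i + 3 * tau - 1).

Lemma inR_window T tau i : inR T tau i ->
  [/\ 0 < i, i + 3 * tau <= size T + 2, 3 * per (window T tau i) <= tau
    & periodic_on T i (i + 3 * tau - 1) (per (window T tau i))].
Proof.
case/and3P=> i_gt0 le_iT; rewrite -/(window T tau i) => le_per; split=> //.
have per_gt0 : 0 < per (window T tau i) by [].
by apply/is_period_sub => //; apply: per_period; rewrite size_sub; lia.
Qed.

Lemma per_window_le T tau i q : 0 < q -> q <= 3 * tau - 1 ->
  periodic_on T i (i + 3 * tau - 1) q -> per (window T tau i) <= q.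
Proof.
move=> q_gt0 le_q per_q; apply: per_min; first exact/is_period_sub.
by rewrite size_sub; lia.
Qed.

Lemma endp_spec T tau j : inR T tau j -> exists2 d, 0 < d &
  [/\ endp T tau j = j + d + 3 * tau - 2,
      forall d', d' < d -> inR T tau (j + d') & ~~ inR T tau (j + d)].
Proof.
move=> Rj; have [j_gt0 _ le_per _] := inR_window Rj.
have per_gt0 : 0 < per (window T tau j) by [].
set a := fun d => ~~ inR T tau (j + d).
have has_a : has a (iota 0 (size T).+2).
  apply/hasP; exists (size T).+1; first by rewrite mem_iota; lia.
  by apply/negP => /and3P[_ ? _]; lia.
have := has_a; rewrite has_find size_iota => lt_find.
have := nth_find 0 has_a; rewrite nth_iota // add0n => notR.
exists (find a (iota 0 (size T).+2)); last split=> //.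
  by rewrite lt0n; apply: contraTneq notR => ->; rewrite /a addn0 Rj.
move=> d lt_d; have := before_find 0 lt_d.
by rewrite nth_iota ?add0n => [/negbFE|]; last lia.
Qed.

Record right_maximal_run T p j e : Prop := RightMaximalRun {
  run_period_gt0 : 0 < p;
  run_start_gt0 : 0 < j;
  run_len_ge_period : j + p <= e;
  run_end_le : e <= (size T).+1;
  run_periodic : periodic_on T j e p;
  run_maximal : e <= size T -> tch T e != tch T (e - p) }.

Lemma run_structure T tau j : inR T tau j ->
  j + 3 * tau - 1 <= endp T tau j /\
  right_maximal_run T (per (window T tau j)) j (endp T tau j).
Proof.
move=> Rj; have [j_gt0 le_jT le_per per_j] := inR_window Rj.
set p := per (window T tau j) in le_per per_j *.
have p_gt0 : 0 < p by [].
have [d d_gt0 [-> R_before notR_d]] := endp_spec Rj.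
have per_run d' : d' < d -> periodic_on T j (j + d' + 3 * tau - 1) p.
  elim: d' => [_|d' IH lt_d']; first by rewrite addn0.
  (* the next window has period q <= tau/3, and p + q is less than the overlap *)
  have [_ _ le_q per_q] := inR_window (R_before _ lt_d').
  rewrite (_ : j + d'.+1 + 3 * tau - 1 = (j + d' + 3 * tau - 1).+1) in per_q *; last by lia.
  by apply: periodic_on_extend per_q _ _ => //; [apply: IH | | ]; lia.
have per_e : periodic_on T j (j + d + 3 * tau - 2) p.
  by rewrite (_ : j + d + 3 * tau - 2 = j + d.-1 + 3 * tau - 1); [apply: per_run|]; lia.
have [_ le_dT _ _] := inR_window (R_before d.-1 ltac:(lia)).
split; first lia; split=> //; try lia.
move=> le_eT; apply: contra notR_d => /eqP eq_e; apply/and3P; split; try lia.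
have per_e1 : periodic_on T j (j + d + 3 * tau - 2).+1 p.
  move=> x le_jx lt_xe; case: (ltnP (x + p) (j + d + 3 * tau - 2)) => [|le_ex].
    by apply: per_e.
  by rewrite (_ : x = j + d + 3 * tau - 2 - p) ?subnK ?eq_e //; lia.
have le_pd : per (window T tau (j + d)) <= p.
  apply: per_window_le => // [|x le_x lt_x]; first lia.
  by apply: per_e1; lia.
by rewrite -/(window T tau (j + d)); lia.
Qed.

Lemma lexmin_in l : l != [::] -> lexmin l \in l.
Proof.
case: l => // x l _; rewrite /lexmin /=.
elim: l x => [|y l IHl] x /=; first by rewrite inE.
have := IHl (if lexlt y x then y else x).
by case: (lexlt y x); rewrite !inE => /orP[/eqP->|->]; rewrite ?eqxx ?orbT.
Qed.

Lemma Lroot_rotation T tau j : exists2 t0, t0 < per (window T tau j) &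
  Lroot T tau j = sub T (j + t0) (j + t0 + per (window T tau j)).
Proof.
have : Lroot T tau j \in [seq sub T (j + t) (j + t + per (window T tau j))
                           | t <- iota 0 (per (window T tau j))].
  by apply: lexmin_in; rewrite -size_eq0 size_map size_iota.
by case/mapP=> t0; rewrite mem_iota => /andP[_ lt_t0] ->; exists t0.
Qed.

Lemma size_Lroot T tau j : size (Lroot T tau j) = per (window T tau j).
Proof. by have [t0 _ ->] := Lroot_rotation T tau j; rewrite size_sub addKn. Qed.

(* S is a prefix of H'HHH..., where H' is the suffix of length s of H. *)
Definition rotpow_prefix (S H : seq nat) s :=
  forall i, i < size S -> nth 0 S i = nth 0 H ((i + size H - s) %% size H).

Lemma size_flatten_nseq (H : seq nat) k : size (flatten (nseq k H)) = k * size H.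
Proof. by elim: k => //= k IHk; rewrite size_cat IHk mulSn. Qed.

Lemma nth_flatten_nseq (H : seq nat) k i : i < k * size H ->
  nth 0 (flatten (nseq k H)) i = nth 0 H (i %% size H).
Proof.
elim: k i => [|k IHk] i lt_i //=; rewrite nth_cat.
case: (ltnP i (size H)) => [lt_iH|le_Hi]; first by rewrite modn_small.
by rewrite IHk -?(modnDr (i - size H)) ?subnK //; move: lt_i; rewrite mulSn; lia.
Qed.

Lemma Ldecomp_rotpow (H : seq nat) s k m : 0 < size H -> s <= size H -> m <= size H ->
  rotpow_prefix (drop (size H - s) H ++ flatten (nseq k H) ++ take m H) H s.
Proof.
move=> H_gt0 le_s le_m i; rewrite !size_cat size_drop size_flatten_nseq size_takel //.
move=> lt_i; rewrite nth_cat size_drop; case: ltnP => [lt_is|le_si].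
  by rewrite nth_drop modn_small; [congr nth|]; lia.
have -> : i + size H - s = (i - s) + size H by lia.
rewrite modnDr nth_cat size_flatten_nseq; case: ltnP => [lt_ik|le_ki].
  by rewrite nth_flatten_nseq; [congr (nth _ _ (_ %% _))|]; lia.
have -> : i - s = k * size H + (i - s - k * size H) by lia.
by rewrite modnMDl modn_small ?nth_take; [congr nth| |]; lia.
Qed.

Lemma Ldecomp_okP S H s : s < size H -> s <= size S ->
  Ldecomp_ok S H s <-> rotpow_prefix S H s.
Proof.
move=> lt_sH le_sS; have H_gt0 : 0 < size H by lia.
split=> [/existsP[k /existsP[m /eqP ->]]|pref_S].
  by apply: Ldecomp_rotpow => //; apply: ltnW.
set k := (size S - s) %/ size H; set m := (size S - s) %% size H.
have lt_k : k < (size S).+1 by rewrite ltnS (leq_trans (leq_div _ _)) ?leq_subr.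
have lt_m : m < size H by rewrite ltn_pmod.
apply/existsP; exists (Ordinal lt_k); apply/existsP; exists (Ordinal lt_m) => /=.
set D := drop _ H ++ _.
have size_D : size D = size S.
  rewrite !size_cat size_drop size_flatten_nseq size_takel; last exact: ltnW.
  by have := divn_eq (size S - s) (size H); lia.
apply/eqP/(@eq_from_nth _ 0) => [|i lt_i]; first by rewrite size_D.
by rewrite pref_S // Ldecomp_rotpow ?size_D //; lia.
Qed.

Lemma rotpow_prefix_period S H s : 0 < size H -> s <= size H -> is_period S (size H) ->
  (forall i, i < size H -> i < size S ->
     nth 0 S i = nth 0 H ((i + size H - s) %% size H)) ->
  rotpow_prefix S H s.
Proof.
move=> H_gt0 le_s /is_periodP[_ per_S] pref_S; elim/ltn_ind=> i IHi lt_i.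
case: (ltnP i (size H)) => [lt_iH|le_Hi]; first exact: pref_S.
rewrite -(subnK le_Hi) -per_S ?subnK // IHi; try lia.
by rewrite -(modnDr (i - size H + size H - s)); congr (nth _ _ (_ %% _)); lia.
Qed.

Lemma Ldecomp_okE T tau x s : inR T tau x -> s < size (Lroot T tau x) ->
  Ldecomp_ok (sub T x (endp T tau x)) (Lroot T tau x) s <->
  (forall i, i < size (Lroot T tau x) -> tch T (x + i) =
     nth 0 (Lroot T tau x) ((i + size (Lroot T tau x) - s) %% size (Lroot T tau x))).
Proof.
move=> Rx lt_s; have [le_e [_ x_gt0 _ _ per_x _]] := run_structure Rx.
have [_ _ le_per _] := inR_window Rx.
have size_H := size_Lroot T tau x; set H := Lroot T tau x in lt_s size_H *.
rewrite Ldecomp_okP ?size_sub; try lia.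
split=> [pref i lt_i|pref]; first by rewrite -pref ?nth_sub ?size_sub //; lia.
apply: rotpow_prefix_period; [lia | lia | | ].
  by rewrite size_H; apply/is_period_sub.
by move=> i lt_i; rewrite size_sub => lt_ie; rewrite nth_sub // pref.
Qed.

Lemma Lhead_spec T tau x : inR T tau x ->
  Lhead T tau x < size (Lroot T tau x) /\
  Ldecomp_ok (sub T x (endp T tau x)) (Lroot T tau x) (Lhead T tau x).
Proof.
move=> Rx; have [le_e [_ x_gt0 _ _ per_x _]] := run_structure Rx.
have [_ _ le_per _] := inR_window Rx.
have [t0 lt_t0 Lroot_t0] := Lroot_rotation T tau x.
set p := per (window T tau x) in lt_t0 Lroot_t0 per_x le_per.
have p_gt0 : 0 < p by [].
set ok := Ldecomp_ok _ _.
have has_ok : has ok (iota 0 (size (Lroot T tau x))).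
  apply/hasP; exists t0; first by rewrite mem_iota size_Lroot.
  apply/Ldecomp_okE; rewrite ?size_Lroot // => i lt_i.
  rewrite Lroot_t0 nth_sub; last by rewrite addKn ltn_pmod.
  apply: (periodic_on_mod p_gt0 per_x); [lia | | ].
    by have := ltn_pmod (i + p - t0) p_gt0; lia.
  by rewrite modnDmr (_ : x + t0 + (i + p - t0) = x + i + p) ?modnDr //; lia.
have := has_ok; rewrite has_find size_iota => lt_find.
by have := nth_find 0 has_ok; rewrite nth_iota.
Qed.

Lemma tch_Lroot T tau x i : inR T tau x -> i < endp T tau x - x ->
  tch T (x + i) = nth 0 (Lroot T tau x)
    ((i + size (Lroot T tau x) - Lhead T tau x) %% size (Lroot T tau x)).
Proof.
move=> Rx lt_i; have [lt_s ok] := Lhead_spec Rx.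
have [le_e _] := run_structure Rx; have [_ _ le_per _] := inR_window Rx.
have le_s : Lhead T tau x <= size (sub T x (endp T tau x)).
  by rewrite size_sub size_Lroot in lt_s *; lia.
by rewrite -(Ldecomp_okP lt_s le_s).1 ?size_sub // nth_sub.
Qed.

Lemma inR_transfer T tau j j' : inR T tau j -> 0 < j' -> j' + 3 * tau <= size T + 2 ->
  (forall i, i < 3 * tau - 1 -> tch T (j + i) = tch T (j' + i)) ->
  [/\ inR T tau j', Lroot T tau j' = Lroot T tau j & Lhead T tau j' = Lhead T tau j].
Proof.
move=> Rj j'_gt0 le_j'T agree; have [_ _ le_per _] := inR_window Rj.
have size_H := size_Lroot T tau j; set p := per (window T tau j) in le_per size_H.
have p_gt0 : 0 < p by [].
have eq_window : window T tau j' = window T tau j.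
  have assoc x : x + 3 * tau - 1 = x + (3 * tau - 1) by lia.
  by rewrite /window !assoc; apply/esym/sub_shift.
have Rj' : inR T tau j'.
  by apply/and3P; split=> //; rewrite -/(window T tau j') eq_window.
have eq_Lroot : Lroot T tau j' = Lroot T tau j.
  rewrite /Lroot -/(window T tau j) -/(window T tau j') eq_window -/p.
  congr lexmin; apply/eq_in_map => t; rewrite mem_iota => /andP[_ lt_t].
  by apply: sub_shift => i lt_i; rewrite -!addnA agree //; lia.
split=> //; rewrite /Lhead /= eq_Lroot.
apply: eq_in_find => s; rewrite mem_iota => /andP[_ lt_s].
have := Ldecomp_okE (s := s) Rj'; rewrite eq_Lroot => /(_ lt_s) okj'.
apply/idP/idP => [/okj' pref | /(Ldecomp_okE Rj lt_s) pref].
  by apply/(Ldecomp_okE Rj lt_s) => i lt_i; rewrite agree ?pref //; lia.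
by apply/okj' => i lt_i; rewrite -agree ?pref //; lia.
Qed.

(* [typ T tau j] is [sign (ascending T (size (Lroot T tau j)) (endp T tau j))]. *)
Definition ascending T p e := (e <= size T) && (tch T (e - p) < tch T e).

Definition sign (b : bool) : Z := if b then 1%Z else (-1)%Z.

Lemma suff_head_mismatch T x y : 0 < x -> 0 < y -> y <= size T ->
  (x <= size T -> tch T x != tch T y) ->
  [/\ lcp (suff T x) (suff T y) = 0,
      lexlt (suff T x) (suff T y) = ~~ ((x <= size T) && (tch T y < tch T x))
    & lexlt (suff T y) (suff T x) = (x <= size T) && (tch T y < tch T x)].
Proof.
move=> x_gt0 y_gt0 le_yT ne_xy; rewrite (suff_cons y_gt0 le_yT).
case: (leqP x (size T)) => [le_xT|lt_Tx] /=; last by rewrite suff_nil.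
have /negbTE ne := ne_xy le_xT; rewrite (suff_cons x_gt0 le_xT) /= ne eq_sym ne /= !orbF.
by rewrite ltn_neqAle leqNgt ne.
Qed.

Lemma suff_opposite_sides T x y c : 0 < x -> 0 < y ->
  (x <= size T -> tch T x != c) -> (y <= size T -> tch T y != c) ->
  (x <= size T) && (c < tch T x) != (y <= size T) && (c < tch T y) ->
  lcp (suff T x) (suff T y) = 0 /\
  lexlt (suff T x) (suff T y) = (y <= size T) && (c < tch T y).
Proof.
move=> x_gt0 y_gt0 ne_x ne_y.
case: (leqP y (size T)) => [le_yT|lt_Ty]; rewrite ?(suff_nil lt_Ty) ?(suff_cons y_gt0 le_yT);
  case: (leqP x (size T)) => [le_xT|lt_Tx]; rewrite ?(suff_nil lt_Tx) ?(suff_cons x_gt0 le_xT) //=;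
  last by case: (c < _).
move: (ne_x le_xT) (ne_y le_yT); case: ltngtP => // cmp_x _; case: ltngtP => // cmp_y _ _;
  by rewrite (_ : (tch T x == tch T y) = false) /=; lia.
Qed.

Section RunComparison.

Variables (T : seq nat) (p j e j' e' : nat).
Hypotheses (run : right_maximal_run T p j e) (run' : right_maximal_run T p j' e').
Hypothesis agree :
  forall i, i < minn (e - j) (e' - j') -> tch T (j + i) = tch T (j' + i).

Lemma run_order_lt : e - j < e' - j' ->
  [/\ LCE T j j' = e - j, lexlt (suff T j) (suff T j') = ~~ ascending T p e
    & lexlt (suff T j') (suff T j) = ascending T p e].
Proof.
rewrite /LCE => lt_t; have [p_gt0 j_gt0 le_jp le_eT _ max_e] := run.
have [_ j'_gt0 le_jp' le_eT' per_e' _] := run'.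
have agree_t i : i < e - j -> tch T (j + i) = tch T (j' + i).
  by move=> lt_i; apply: agree; rewrite (minn_idPl (ltnW lt_t)).
have [|//|u size_u [-> ->]] := suff_common_prefix j_gt0 j'_gt0 _ _ agree_t; try lia.
have after_run : tch T (j' + (e - j)) = tch T (e - p).
  rewrite (_ : e - p = j + (e - j - p)) ?agree_t; try lia.
  by rewrite [RHS]per_e'; [congr tch | ..]; lia.
have mismatch : e <= size T -> tch T e != tch T (j' + (e - j)) by rewrite after_run.
have [|||lcp0 lt1 lt2] := suff_head_mismatch _ _ _ mismatch; try lia.
by rewrite lcp_cat2l !lexlt_cat2l size_u subnKC ?lcp0 ?addn0 ?lt1 ?lt2 ?after_run; try lia.
Qed.

Lemma run_order_eq : e - j = e' - j' -> ascending T p e != ascending T p e' ->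
  LCE T j j' = e - j /\ lexlt (suff T j) (suff T j') = ascending T p e'.
Proof.
rewrite /LCE => eq_t asc_ne; have [p_gt0 j_gt0 le_jp le_eT _ max_e] := run.
have [_ j'_gt0 le_jp' le_eT' _ max_e'] := run'.
have agree_t i : i < e - j -> tch T (j + i) = tch T (j' + i).
  by move=> lt_i; apply: agree; rewrite -eq_t minnn.
have [|//|u size_u [-> ->]] := suff_common_prefix j_gt0 j'_gt0 _ _ agree_t; try lia.
have eq_p : tch T (e' - p) = tch T (e - p).
  by rewrite (_ : e - p = j + (e - j - p)) ?agree_t; [congr tch | ..]; lia.
have ne_e' : e' <= size T -> tch T e' != tch T (e - p) by rewrite -eq_p.
have [|||lcp0 lt] := suff_opposite_sides _ _ max_e ne_e'; try lia.
  by move: asc_ne; rewrite /ascending eq_p.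
rewrite lcp_cat2l !lexlt_cat2l size_u subnKC ?eq_t ?subnKC; try lia.
by rewrite lcp0 addn0 lt /ascending eq_p.
Qed.

End RunComparison.

Lemma run_order T p j e j' e' :
  right_maximal_run T p j e -> right_maximal_run T p j' e' ->
  (forall i, i < minn (e - j) (e' - j') -> tch T (j + i) = tch T (j' + i)) ->
  ascending T p e != ascending T p e' \/ e - j != e' - j' ->
  LCE T j j' = minn (e - j) (e' - j') /\
  lexlt (suff T j) (suff T j') =
    if e - j < e' - j' then ~~ ascending T p e else ascending T p e'.
Proof.
move=> run run' agree; case: ltngtP => [lt_t|gt_t|eq_t] differ.
- by have [-> -> _] := run_order_lt run run' agree lt_t.
- have agree' i : i < minn (e' - j') (e - j) -> tch T (j' + i) = tch T (j + i).
    by rewrite minnC => /agree.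
  have [lce _ ->] := run_order_lt run' run agree' gt_t.
  by rewrite /LCE lcpC -/(LCE T j' j) lce.
- have {}differ : ascending T p e != ascending T p e'.
    by case: differ => // /eqP; rewrite eq_t.
  by have [-> ->] := run_order_eq run run' agree eq_t differ.
Qed.

Lemma RsH_run T tau s H x : inRsH T tau s H x ->
  3 * tau - 1 <= endp T tau x - x /\ right_maximal_run T (size H) x (endp T tau x).
Proof.
case=> Rx [<- _]; rewrite size_Lroot.
by have [le_e run] := run_structure Rx; split=> //; lia.
Qed.

Lemma RsH_agree T tau s H x y i : inRsH T tau s H x -> inRsH T tau s H y ->
  i < minn (endp T tau x - x) (endp T tau y - y) -> tch T (x + i) = tch T (y + i).
Proof.
move=> [Rx [Hx sx]] [Ry [Hy sy]]; rewrite leq_min => /andP[lt_x lt_y].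
by rewrite (tch_Lroot Rx lt_x) (tch_Lroot Ry lt_y) Hx Hy sx sy.
Qed.

Lemma RsH_LCE_ge T tau s H x y : inRsH T tau s H x -> inRsH T tau s H y ->
  minn (endp T tau x - x) (endp T tau y - y) <= LCE T x y.
Proof.
move=> RsHx RsHy; have [_ [p_gt0 x_gt0 le_x le_ex _ _]] := RsH_run RsHx.
have [_ [_ y_gt0 le_y le_ey _ _]] := RsH_run RsHy.
apply/LCE_geP => //; first lia.
by split; [lia | lia | move=> i; apply: RsH_agree RsHx RsHy].
Qed.

Lemma RsH_of_LCE T tau s H j j' : inRsH T tau s H j -> 0 < j' ->
  3 * tau - 1 <= LCE T j j' -> inRsH T tau s H j'.
Proof.
move=> [Rj [Hj sj]] j'_gt0; have [j_gt0 _ le_per _] := inR_window Rj.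
have per_gt0 : 0 < per (window T tau j) by [].
case/LCE_geP=> //; first lia.
move=> _ le_j'T agree.
have [|Rj' eq_root eq_head] := inR_transfer Rj j'_gt0 _ agree; first lia.
by rewrite /inRsH eq_root eq_head.
Qed.

Lemma sign_order (b b' : bool) (t t' L m : nat) (lt : bool) :
  (b != b' \/ t != t' -> L = m /\ lt = if t < t' then ~~ b else b') ->
  (sign b <> sign b' -> (lt <-> (sign b < sign b')%Z)) /\
  (sign b = (-1)%Z -> sign b' = (-1)%Z -> t <> t' -> (lt <-> t < t')) /\
  (sign b = 1%Z -> sign b' = 1%Z -> t <> t' -> (lt <-> t' < t)) /\
  (sign b <> sign b' \/ t <> t' -> L = m).
Proof.
case: b b' => [] [] /= order.
all: split; [move=> ne | split; [move=> sb sb' ne | split; [move=> sb sb' ne | case=> ne]]];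
  try discriminate; try by case: (ne erefl).
all: have [|eq_L eq_lt] := order _; [by [left | right; apply/eqP] | rewrite ?eq_lt //].
all: case: ltngtP => cmp; lia.
Qed.

Theorem lemma5p11 (sigma : nat) (T : seq nat) (mu : R) (tau : nat)
  (Halph : all (fun c => c < sigma) T)
  (Hsigma2 : 2 <= sigma)
  (Hsigman : (INR sigma < Rpower (INR (size T)) (1 / 7))%R)
  (Hmu0 : (0 < mu)%R) (Hmu1 : (mu < 1 / 6)%R)
  (Htau_floor : (INR tau <= mu * (ln (INR (size T)) / ln (INR sigma))
                 < INR tau + 1)%R)
  (Htau1 : 1 <= tau)
  (H : seq nat) (s j : nat)
  (Hj : inRsH T tau s H j) :
  forall j' : nat, 1 <= j' <= size T ->
    (3 * tau - 1 <= LCE T j j' <-> inRsH T tau s H j') /\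
    (inRsH T tau s H j' ->
      let t := endp T tau j - j in
      let t' := endp T tau j' - j' in
      minn t t' <= LCE T j j' /\
      (typ T tau j <> typ T tau j' ->
         (lexlt (suff T j) (suff T j') <-> (typ T tau j < typ T tau j')%Z)) /\
      (typ T tau j = (-1)%Z -> typ T tau j' = (-1)%Z -> t <> t' ->
         (lexlt (suff T j) (suff T j') <-> t < t')) /\
      (typ T tau j = 1%Z -> typ T tau j' = 1%Z -> t <> t' ->
         (lexlt (suff T j) (suff T j') <-> t' < t)) /\
      (typ T tau j <> typ T tau j' \/ t <> t' -> LCE T j j' = minn t t')).
Proof.
move=> j' /andP[j'_gt0 _]; have [le_t run] := RsH_run Hj.
split; first split; first exact: RsH_of_LCE.
  move=> Hj'; have [le_t' _] := RsH_run Hj'.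
  by apply: leq_trans (RsH_LCE_ge Hj Hj'); rewrite leq_min le_t le_t'.
move=> Hj' /=; have [_ run'] := RsH_run Hj'.
have typE x : inRsH T tau s H x ->
    typ T tau x = sign (ascending T (size H) (endp T tau x)).
  by case=> _ [<- _].
rewrite (typE _ Hj) (typE _ Hj'); split; first exact: RsH_LCE_ge Hj Hj'.
exact: sign_order (run_order run run' (fun i => RsH_agree Hj Hj')).
Qed.
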